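(* Assume: (i) for every $t$ the local noises $w^1_t,\ldots,w^n_t$ are i.i.d.; (ii) there are $K_T,K_c>0$ with $|T(s',s,m)-T(s',s,m')|\le K_T\|m-m'\|_\infty$ and $c(m,\hat m,a)\le K_c\|m-\hat m\|_\infty$ for all $s',s\in\mathcal{S}$, $a\in\{0,1\}$, $m,m',\hat m\in\mathcal{P}(\mathcal{S})$; (iii) $\gamma K_p<1$, where $K_p>0$ is a constant with $\|\bar T(p)-\bar T(\hat p)\|_\infty\le K_p\|p-\hat p\|_\infty$ for all $p,\hat p\in\mathcal{P}(\mathcal{S})$. Consider the estimator that never collects data: $\hat m_1=m_1$ and $\hat m_t=\bar T\circ\cdots\circ\bar T(\hat m_1)$ ($t-1$ compositions) for $t\ge2$. Then the total expected discounted cost of this estimator is bounded and converges to zero at rate $1/\sqrt n$: $$\mathbb{E}\Big[\sum_{t=1}^\infty\gamma^{t-1}c(m_t,\hat m_t,0)\Big]\le\frac{\gamma K_c}{(1-\gamma)(1-\gamma K_p)}\,\mathcal{O}\Big(\frac1{\sqrt n}\Big),$$ where the $\mathcal{O}(1/\sqrt n)$ term depends on the variance of the local noises.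
   Context: $n$ nodes with states $s^i_t$ in a finite set $\mathcal{S}\subset\mathbb{R}$, time $t\in\mathbb{N}$. Empirical distribution $m_t(s)=\frac1n\sum_{i=1}^n\mathbb{1}\{s^i_t=s\}$. Dynamics $s^i_{t+1}=f(s^i_t,m_t,w^i_t)$ with local noise $w^i_t$ in a finite set $\mathcal{W}$ with common distribution $P_W$; $f$ is defined for $m\in\mathcal{P}(\mathcal{S})$ (probability vectors on $\mathcal{S}$). $T(s',s,m)=\sum_{w\in\mathcal{W}}P_W(w)\mathbb{1}\{s'=f(s,m,w)\}$. Define $\bar T:\mathcal{P}(\mathcal{S})\to\mathcal{P}(\mathcal{S})$ by $\bar T(p)=\sum_{s\in\mathcal{S}}p(s)T(\cdot,s,p)$. Cost $c:\mathcal{P}(\mathcal{S})^2\times\{0,1\}\to\mathbb{R}_{\ge0}$; discount $\gamma\in(0,1)$. Initial states and noises are mutually independent with finite variances. *)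

From HB Require Import structures.
From mathcomp Require Import all_boot all_order all_algebra.
From mathcomp Require Import all_classical all_reals all_analysis.
Set Implicit Arguments.
Unset Strict Implicit.
Unset Printing Implicit Defensive.
Import Order.TTheory GRing.Theory Num.Theory.
Import numFieldNormedType.Exports.
Local Open Scope classical_set_scope.
Local Open Scope ring_scope.

Definition is_prob {R : realType} {S : finType} (p : S -> R) : Prop :=
  (forall s, 0 <= p s) /\ \sum_(s : S) p s = 1.

Definition normInf {R : realType} {S : finType} (p : S -> R) : R :=
  \big[Num.max/0]_(s : S) `|p s|.

Definition kernelT {R : realType} {S W : finType} (PW : W -> R)
  (f : S -> (S -> R) -> W -> S) (s' s : S) (m : S -> R) : R :=
  \sum_(w : W) PW w * (s' == f s m w)%:R.

Definition Tbar {R : realType} {S W : finType} (PW : W -> R)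
  (f : S -> (S -> R) -> W -> S) (p : S -> R) : S -> R :=
  fun s' => \sum_(s : S) p s * kernelT PW f s' s p.

Definition empirical {R : realType} {S : finType} (n : nat) (x : 'I_n -> S)
  : S -> R :=
  fun s => (#|[set i | x i == s]|)%:R / n%:R.

Definition discrete_rv {d} {Ω : measurableType d} {V : finType}
  (X : Ω -> V) : Prop :=
  forall v : V, measurable (X @^-1` [set v]).

Definition mutually_independent {R : realType} {d} {Ω : measurableType d}
  (P : probability Ω R) {S W : finType} (n : nat)
  (s1 : 'I_n -> Ω -> S) (w : nat -> 'I_n -> Ω -> W) : Prop :=
  forall (A : {set 'I_n}) (B : seq (nat * 'I_n)), uniq B ->
  forall (a : 'I_n -> S) (b : nat -> 'I_n -> W),
    P [set ω | (forall i, i \in A -> s1 i ω = a i) /\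
               (forall tj, tj \in B -> w tj.1 tj.2 ω = b tj.1 tj.2)]
    = ((\prod_(i in A) fine (P [set ω | s1 i ω = a i])) *
       (\prod_(tj <- B) fine (P [set ω | w tj.1 tj.2 ω = b tj.1 tj.2])))%:E.

(* the state process, with time shifted by one: state 0 = s_1 (paper time 1),
   state (t+1) i = f (state t i) (m_t) (w t i), w t = paper w_{t+1} *)
Fixpoint state {R : realType} {S W : finType} (f : S -> (S -> R) -> W -> S)
  {Ω : Type} (n : nat) (s1 : 'I_n -> Ω -> S) (w : nat -> 'I_n -> Ω -> W)
  (t : nat) (ω : Ω) : 'I_n -> S :=
  match t with
  | 0 => fun i => s1 i ω
  | t'.+1 => fun i => f (state f s1 w t' ω i)
                         (empirical (state f s1 w t' ω)) (w t' i ω)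
  end.

(* the no-data estimator: mhat_1 = m_1, mhat_{t} = Tbar^(t-1)(mhat_1);
   index shifted: mhat t = Tbar^t (m_1) *)
Definition mhat {R : realType} {S W : finType} (PW : W -> R)
  (f : S -> (S -> R) -> W -> S) {Ω : Type} (n : nat)
  (s1 : 'I_n -> Ω -> S) (t : nat) (ω : Ω) : S -> R :=
  iter t (Tbar PW f) (empirical (fun i => s1 i ω)).

(* E[ sum_{t>=1} gamma^(t-1) c(m_t, mhat_t, 0) ]  (action 0 = false) *)
Definition expected_cost {R : realType} {d} {Ω : measurableType d}
  (P : probability Ω R) {S W : finType} (PW : W -> R)
  (f : S -> (S -> R) -> W -> S) (c : (S -> R) -> (S -> R) -> bool -> R)
  (γ : R) (n : nat) (s1 : 'I_n -> Ω -> S) (w : nat -> 'I_n -> Ω -> W)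
  : \bar R :=
  (\int[P]_ω (\sum_(0 <= t <oo)
      ((γ ^+ t * c (empirical (state f s1 w t ω)) (mhat PW f s1 t ω) false)%:E)))%E.

(* The error e_t := ||m_t - mhat_t||_oo starts at 0 and, since
   mhat_(t+1) = Tbar mhat_t, satisfies e_(t+1) <= y_t + K_p e_t with
   y_t := ||m_(t+1) - Tbar m_t||_oo.  Weighting by gamma^t and summing gives
     sum_t gamma^t c_t <= K_c sum_t gamma^t e_t
                       <= gamma K_c / (1 - gamma K_p) sum_t gamma^t y_t.
   Given (s_1, w_1, ..., w_(t-1)), each m_(t+1)(s') - (Tbar m_t)(s')
   is the mean of n independent centred terms bounded by 1, so its second
   moment is at most 1/n; the inequality |z| <= (sqrt n z^2 + 1/sqrt n) / 2
   turns this into a first-moment bound 1/sqrt n, hence E y_t <= |S| / sqrt n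
   and the geometric series adds the factor 1 / (1 - gamma): C = |S| works.
   To integrate, y_t is written as a function of the finite-valued pair
   (history up to t, current noise), whose law factorises by independence. *)

From HB Require Import structures.
From mathcomp Require Import all_boot all_order all_algebra.
From mathcomp Require Import all_classical all_reals all_analysis.
From mathcomp Require Import measurable_realfun ring lra.
Import Order.TTheory GRing.Theory Num.Theory.
Import numFieldNormedType.Exports.
Local Open Scope classical_set_scope.
Local Open Scope ring_scope.

Section DiscreteRV.
Context {R : realType} {d : measure_display} {Ω : measurableType d}
  (P : probability Ω R) {V : finType}.

Definition fin_pmf (X : Ω -> V) (v : V) : R := fine (P (X @^-1` [set v])).

Lemma discrete_rv_preimage (X : Ω -> V) (B : set V) :
  discrete_rv X -> measurable (X @^-1` B).
Proof.
move=> dX.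
have -> : X @^-1` B = \bigcup_(v in B) X @^-1` [set v].
  by apply/seteqP; split => [om /= Bx|om [v Bv /= ->]//]; exists (X om).
by apply: fin_bigcup_measurable => [|v _]; [exact: finite_finset|exact: dX].
Qed.

Lemma discrete_rv_measurable_fun (X : Ω -> V) (g : V -> R) :
  discrete_rv X -> measurable_fun setT (fun om => (g (X om))%:E).
Proof.
move=> dX _ Y _; rewrite setTI.
exact: (discrete_rv_preimage X ((fun v => (g v)%:E) @^-1` Y) dX).
Qed.

Lemma integral_discrete_rv (X : Ω -> V) (g : V -> R) :
  discrete_rv X -> (forall v, 0 <= g v) ->
  (\int[P]_om (g (X om))%:E = (\sum_v g v * fin_pmf X v)%:E)%E.
Proof.
move=> dX g0.
have indic_ge0 v om : (0 <= (\1_(X @^-1` [set v]) om : R)%:E)%E.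
  by rewrite indicE lee_fin ler0n.
have indic_mfun v :
    measurable_fun setT (fun om => (\1_(X @^-1` [set v]) om : R)%:E).
  exact/measurable_EFinP/measurable_indic/dX.
have -> : (fun om => (g (X om))%:E) =
    (fun om => \sum_v ((g v)%:E * (\1_(X @^-1` [set v]) om : R)%:E))%E.
  apply/funext => om; rewrite (bigD1 (X om)) //= big1 ?adde0.
    by rewrite indicE mem_set //= mule1.
  move=> v /negPf vX; rewrite indicE memNset ?mule0 //= => Xv.
  by rewrite Xv eqxx in vX.
rewrite ge0_integral_sum //; last 2 first.
- by move=> v; exact/measurable_funeM/indic_mfun.
- by move=> v om _; apply: mule_ge0; rewrite ?lee_fin.
rewrite -sumEFin; apply: eq_bigr => v _.
rewrite (@ge0_integralZl_EFin _ _ _ P setT measurableT _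
  (fun om _ => indic_ge0 v om) (indic_mfun v) _ (g0 v)).
have mXv : measurable (X @^-1` [set v]) := dX v.
by rewrite integral_indic ?setIT // /fin_pmf EFinM fineK ?fin_num_measure.
Qed.

Lemma sum_fin_pmf (X : Ω -> V) : discrete_rv X -> \sum_v fin_pmf X v = 1.
Proof.
move=> dX; apply: EFin_inj; rewrite -(probability_setT P).
have := integral_discrete_rv X (fun _ => 1) dX (fun _ => ler01).
rewrite integral_cst // mul1e => ->.
by under [in RHS]eq_bigr do rewrite mul1r.
Qed.

End DiscreteRV.

Section SupNorm.
Context {R : realType} {S : finType}.
Implicit Types p q r : S -> R.

Lemma normInf_ge0 p : 0 <= normInf p.
Proof.
rewrite /normInf; elim/big_ind: _ => [//|x y x0 y0|s _]; last exact: normr_ge0.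
by rewrite le_max x0.
Qed.

Lemma normInf_le p (b : R) :
  0 <= b -> (forall s, `|p s| <= b) -> normInf p <= b.
Proof. by move=> b0 pb; apply: bigmax_le. Qed.

Lemma ler_normInf p s : `|p s| <= normInf p.
Proof. exact: le_bigmax. Qed.

Lemma normInf0 : normInf (0 : S -> R) = 0.
Proof.
apply/eqP; rewrite eq_le normInf_ge0 andbT.
by rewrite normInf_le // => s; rewrite normr0.
Qed.

Lemma normInf_subr_triangle p q r :
  normInf (p - r) <= normInf (p - q) + normInf (q - r).
Proof.
apply: normInf_le => [|s]; first by rewrite addr_ge0 // normInf_ge0.
have -> : (p - r) s = (p - q) s + (q - r) s by rewrite /= addrA subrK.
by apply: le_trans (ler_normD _ _) _; apply: lerD; apply: ler_normInf.
Qed.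

Lemma normInf_le_sum p : normInf p <= \sum_s `|p s|.
Proof.
apply: normInf_le => [|s]; first exact: sumr_ge0.
by rewrite (bigD1 s) //= lerDl; exact: sumr_ge0.
Qed.

End SupNorm.

Section Empirical.
Context {R : realType} {S : finType} {n : nat}.
Implicit Types x : 'I_n -> S.

Lemma card_fiberE x s : (#|[set i | x i == s]|%:R : R) = \sum_i (x i == s)%:R.
Proof.
rewrite -sum1_card natr_sum big_mkcond /=; apply: eq_bigr => i _.
have -> : (i \in [set i0 | x i0 == s]) = (x i == s).
  by apply/idP/idP => [/set_mem //|xs]; apply/mem_set.
by case: (x i == s).
Qed.

Lemma sum_card_fiberM x (F : S -> R) :
  \sum_s #|[set i | x i == s]|%:R * F s = \sum_i F (x i).
Proof.
under eq_bigr do rewrite card_fiberE mulr_suml.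
rewrite exchange_big /=; apply: eq_bigr => i _.
rewrite (bigD1 (x i)) //= eqxx mul1r big1 ?addr0 // => s /negPf.
by rewrite eq_sym => ->; rewrite mul0r.
Qed.

Lemma sum_empiricalM x (F : S -> R) :
  \sum_s empirical x s * F s = n%:R^-1 * \sum_i F (x i).
Proof.
rewrite -sum_card_fiberM mulr_sumr; apply: eq_bigr => s _.
by rewrite /empirical mulrAC mulrC.
Qed.

Lemma empirical_prob x : (0 < n)%N -> is_prob (empirical x : S -> R).
Proof.
move=> n0; split => [s|]; first by rewrite /empirical divr_ge0.
have := sum_empiricalM x (fun _ => 1).
under eq_bigr do rewrite mulr1; move=> ->.
by rewrite sumr_const card_ord mulVf // pnatr_eq0 -lt0n.
Qed.

End Empirical.

Section Kernel.
Context {R : realType} {S W : finType} (PW : W -> R)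
  (f : S -> (S -> R) -> W -> S).
Hypothesis PW_prob : is_prob PW.

Lemma kernelT_ge0 s' s m : 0 <= kernelT PW f s' s m.
Proof. by apply: sumr_ge0 => u _; rewrite mulr_ge0 // PW_prob.1. Qed.

Lemma kernelT_le1 s' s m : kernelT PW f s' s m <= 1.
Proof.
rewrite -PW_prob.2; apply: ler_sum => u _.
by rewrite ler_piMr ?PW_prob.1 //; case: (_ == _).
Qed.

Lemma sum_kernelT s m : \sum_s' kernelT PW f s' s m = 1.
Proof.
rewrite /kernelT exchange_big /= -[RHS]PW_prob.2; apply: eq_bigr => u _.
rewrite -mulr_sumr (bigD1 (f s m u)) //= eqxx big1 ?addr0 ?mulr1 //.
by move=> s' /negPf ->.
Qed.

Lemma Tbar_prob p : is_prob p -> is_prob (Tbar PW f p).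
Proof.
move=> [p0 p1]; split => [s'|].
  by apply: sumr_ge0 => s _; rewrite mulr_ge0 // kernelT_ge0.
rewrite /Tbar exchange_big /= -p1; apply: eq_bigr => s _.
by rewrite -mulr_sumr sum_kernelT mulr1.
Qed.

Lemma iter_Tbar_prob t p : is_prob p -> is_prob (iter t (Tbar PW f) p).
Proof. by move=> pp; elim: t => //= t; exact: Tbar_prob. Qed.

End Kernel.

Definition iid_expect {R : realType} {W : finType} (p : W -> R) (n : nat)
  (F : {ffun 'I_n -> W} -> R) : R :=
  \sum_(v : {ffun 'I_n -> W}) (\prod_k p (v k)) * F v.

Section IidExpectation.
Context {R : realType} {W : finType} (p : W -> R) (n : nat).
Hypothesis p_prob : is_prob p.
Local Notation E := (iid_expect p n).
Implicit Types F G : {ffun 'I_n -> W} -> R.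

Lemma iid_expect_prod (a : 'I_n -> W -> R) :
  E (fun v => \prod_k a k (v k)) = \prod_k \sum_u p u * a k u.
Proof.
by rewrite bigA_distr_bigA; apply: eq_bigr => v _; rewrite big_split.
Qed.

Lemma iid_expect_cst (b : R) : E (fun _ => b) = b.
Proof.
have total : \sum_(v : {ffun 'I_n -> W}) \prod_k p (v k) = 1.
  have := iid_expect_prod (fun _ _ => 1).
  rewrite /iid_expect
    (eq_bigr (fun v : {ffun 'I_n -> W} => \prod_k p (v k))) => [->|v _].
    by apply: big1 => k _; under eq_bigr do rewrite mulr1; exact: p_prob.2.
  by rewrite big1_eq mulr1.
by rewrite /iid_expect -mulr_suml total mul1r.
Qed.

Lemma iid_expect_ler F G : (forall v, F v <= G v) -> E F <= E G.
Proof.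
move=> FG; apply: ler_sum => v _; apply: ler_wpM2l => //.
by apply: prodr_ge0 => k _; exact: p_prob.1.
Qed.

Lemma iid_expect_sum (I : finType) (F : I -> {ffun 'I_n -> W} -> R) :
  E (fun v => \sum_i F i v) = \sum_i E (F i).
Proof.
by rewrite /iid_expect exchange_big; apply: eq_bigr => v _; rewrite mulr_sumr.
Qed.

Lemma iid_expect_affine (a b : R) F : E (fun v => a * F v + b) = a * E F + b.
Proof.
rewrite -[b in RHS]iid_expect_cst /iid_expect mulr_sumr -big_split /=.
by apply: eq_bigr => v _; rewrite mulrDr mulrCA.
Qed.

Lemma iid_expect_uncorrelated i j (a b : W -> R) :
  i != j -> \sum_u p u * a u = 0 -> E (fun v => a (v i) * b (v j)) = 0.
Proof.
move=> ij a0.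
pose c k u := if k == i then a u else if k == j then b u else 1.
have -> : (fun v : {ffun 'I_n -> W} => a (v i) * b (v j)) =
    (fun v => \prod_k c k (v k)).
  apply/funext => v; rewrite (bigD1 i) //= (bigD1 j) 1?eq_sym //= big1.
    by rewrite /c eqxx eq_sym (negPf ij) eqxx mulr1.
  by move=> k /andP[ki kj]; rewrite /c (negPf ki) (negPf kj).
rewrite iid_expect_prod (bigD1 i) //=.
by rewrite (eq_bigr (fun u => p u * a u)) ?a0 ?mul0r // => u _; rewrite /c eqxx.
Qed.

Lemma iid_expect_sum_sqr_le (a : 'I_n -> W -> R) :
  (forall i, \sum_u p u * a i u = 0) -> (forall i u, a i u ^+ 2 <= 1) ->
  E (fun v => (\sum_i a i (v i)) ^+ 2) <= n%:R.
Proof.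
move=> a0 a1.
have -> : (fun v : {ffun 'I_n -> W} => (\sum_i a i (v i)) ^+ 2) =
    (fun v => \sum_i \sum_j a i (v i) * a j (v j)).
  apply/funext => v; rewrite expr2 mulr_suml.
  by under eq_bigr do rewrite mulr_sumr.
rewrite iid_expect_sum -[n in n%:R]card_ord -sumr_const; apply: ler_sum => i _.
rewrite iid_expect_sum (bigD1 i) //= big1 => [|j ji]; last first.
  by apply: iid_expect_uncorrelated; rewrite // eq_sym.
rewrite addr0 -[1]iid_expect_cst; apply: iid_expect_ler => v.
by rewrite -expr2.
Qed.

End IidExpectation.

Lemma normr_le_AMGM {R : realFieldType} (a z : R) : 0 < a ->
  `|z| <= (a * z ^+ 2 + a^-1) / 2.
Proof.
move=> a0; rewrite -(real_normK (num_real z)) -subr_ge0.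
have -> : (a * `|z| ^+ 2 + a^-1) / 2 - `|z| = a^-1 * (a * `|z| - 1) ^+ 2 / 2.
  by field; rewrite gt_eqF.
by rewrite divr_ge0 // mulr_ge0 ?sqr_ge0 // invr_ge0 ltW.
Qed.

Section Fluctuation.
Context {R : realType} {S W : finType} (PW : W -> R)
  (f : S -> (S -> R) -> W -> S) {n : nat}.
Hypothesis PW_prob : is_prob PW.
Hypothesis n_gt0 : (0 < n)%N.
Implicit Types (x : 'I_n -> S).

Definition step x (v : 'I_n -> W) : 'I_n -> S :=
  fun i => f (x i) (empirical x) (v i).

Definition fluctuation x (v : 'I_n -> W) : S -> R :=
  empirical (step x v) - Tbar PW f (empirical x).

Definition transition_noise x s' i u : R :=
  (s' == f (x i) (empirical x) u)%:R - kernelT PW f s' (x i) (empirical x).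

Lemma fluctuationE x (v : 'I_n -> W) s' :
  fluctuation x v s' = n%:R^-1 * \sum_i transition_noise x s' i (v i).
Proof.
rewrite /fluctuation !fctE /Tbar sum_empiricalM {1}/empirical card_fiberE.
rewrite mulrC -mulrBr -sumrB; congr (_ * _); apply: eq_bigr => i _.
by rewrite /transition_noise eq_sym.
Qed.

Lemma transition_noise_mean x s' i :
  \sum_u PW u * transition_noise x s' i u = 0.
Proof.
rewrite /transition_noise; under eq_bigr do rewrite mulrBr.
by rewrite sumrB -mulr_suml PW_prob.2 mul1r subrr.
Qed.

Lemma transition_noise_sqr_le1 x s' i u : transition_noise x s' i u ^+ 2 <= 1.
Proof.
have k0 := kernelT_ge0 PW f PW_prob s' (x i) (empirical x).
have k1 := kernelT_le1 PW f PW_prob s' (x i) (empirical x).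
by rewrite /transition_noise; case: (_ == _); rewrite /= ?mulr1n ?mulr0n; nra.
Qed.

Lemma iid_expect_fluctuation_sqr x s' :
  iid_expect PW n (fun v => fluctuation x v s' ^+ 2) <= n%:R^-1.
Proof.
have nz : (n%:R : R) != 0 by rewrite pnatr_eq0 -lt0n.
under eq_fun do rewrite fluctuationE exprMn -[_ * _]addr0.
rewrite iid_expect_affine // addr0.
have := iid_expect_sum_sqr_le PW n PW_prob _ (transition_noise_mean x s')
  (transition_noise_sqr_le1 x s').
move=> /(ler_wpM2l (sqr_ge0 (n%:R^-1 : R))) /le_trans; apply.
by rewrite expr2 -mulrA mulVf // mulr1.
Qed.

Lemma iid_expect_normInf_fluctuation x :
  iid_expect PW n (fun v => normInf (fluctuation x v)) <=
  #|S|%:R / Num.sqrt n%:R.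
Proof.
set sq := Num.sqrt (n%:R : R).
have sq_gt0 : 0 < sq by rewrite sqrtr_gt0 ltr0n.
apply: le_trans (iid_expect_ler PW n PW_prob
  _ (fun v => \sum_s' (sq * fluctuation x v s' ^+ 2 + sq^-1) / 2) _) _.
  move=> v; apply: le_trans (normInf_le_sum _) _; apply: ler_sum => s' _.
  exact: normr_le_AMGM.
rewrite iid_expect_sum mulr_natl -sumr_const.
apply: ler_sum => s' _.
under eq_fun do rewrite mulrDl mulrAC.
rewrite iid_expect_affine //.
move: (iid_expect_fluctuation_sqr x s').
move=> /(ler_wpM2l (divr_ge0 (ltW sq_gt0) (ler0n R 2))).
have -> : sq / 2 * n%:R^-1 = sq^-1 / 2.
  by rewrite -[n%:R]sqr_sqrtr ?ler0n // -/sq; field; rewrite gt_eqF.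
lra.
Qed.

End Fluctuation.

Section History.
Context {R : realType} {S W : finType} (PW : W -> R)
  (f : S -> (S -> R) -> W -> S) (w0 : W) {n : nat}
  {d : measure_display} {Ω : measurableType d}
  (P : probability Ω R) (s1 : 'I_n -> Ω -> S) (w : nat -> 'I_n -> Ω -> W).
Hypothesis s1_discrete : forall i, discrete_rv (s1 i).
Hypothesis w_discrete : forall t i, discrete_rv (w t i).

Definition history t := ({ffun 'I_n -> S} * {ffun 'I_t * 'I_n -> W})%type.

Definition hist t (om : Ω) : history t :=
  ([ffun i => s1 i om], [ffun ki : 'I_t * 'I_n => w ki.1 ki.2 om]).

Definition noise t om : {ffun 'I_n -> W} := [ffun i => w t i om].

Definition hist_noise t om : history t * {ffun 'I_n -> W} :=
  (hist t om, noise t om).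

(* The value [w0] at times [k >= t] is never read when replaying up to [t]. *)
Definition recorded_noise {t} (h : history t) k i : W :=
  if insub k is Some k' then h.2 (k', i) else w0.

Definition extended_noise {t} (h : history t) (v : {ffun 'I_n -> W}) k i : W :=
  if k == t then v i else recorded_noise h k i.

Definition replay {t} (h : history t) t' : 'I_n -> S :=
  state f (fun i (_ : unit) => h.1 i)
    (fun k i (_ : unit) => recorded_noise h k i) t' tt.

Definition past_slots t : seq (nat * 'I_n) :=
  [seq (k, i) | k <- iota 0 t, i <- index_enum 'I_n].

Definition present_slots t : seq (nat * 'I_n) :=
  [seq (t, i) | i <- index_enum 'I_n].

Lemma recorded_noise_lt {t} (h : history t) {k} i (kt : (k < t)%N) :
  recorded_noise h k i = h.2 (Ordinal kt, i).
Proof.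
rewrite /recorded_noise; case: insubP => [k' _ kv|]; last by rewrite kt.
by congr (h.2 (_, i)); apply: val_inj.
Qed.

Lemma mem_past_slots t k i : ((k, i) \in past_slots t) = (k < t)%N.
Proof.
apply/allpairsP/idP => [[[k' i'] [/= + _ [-> _]]]|kt].
  by rewrite mem_iota.
by exists (k, i); rewrite /= mem_iota mem_index_enum kt.
Qed.

Lemma mem_slots t k i :
  ((k, i) \in past_slots t ++ present_slots t) = (k <= t)%N.
Proof.
rewrite mem_cat mem_past_slots.
have -> : ((k, i) \in present_slots t) = (k == t).
  by apply/mapP/eqP => [[j _ [-> _]] //|->]; exists i; rewrite ?mem_index_enum.
by rewrite [in RHS]leq_eqVlt orbC.
Qed.

Lemma past_slots_uniq t : uniq (past_slots t).
Proof.
apply: allpairs_uniq => [||[a b] [c e] _ _ /= [-> ->]] //.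
  exact: iota_uniq.
exact: index_enum_uniq.
Qed.

Lemma slots_uniq t : uniq (past_slots t ++ present_slots t).
Proof.
rewrite cat_uniq past_slots_uniq /=; apply/andP; split.
  by apply/hasPn => tj /mapP [i _ ->]; rewrite mem_past_slots ltnn.
by rewrite map_inj_uniq ?index_enum_uniq // => i j [].
Qed.

Lemma measurable_cylinder (A : {set 'I_n}) (B : seq (nat * 'I_n))
    (a : 'I_n -> S) (b : nat -> 'I_n -> W) :
  measurable [set om | (forall i, i \in A -> s1 i om = a i) /\
                       (forall tj, tj \in B -> w tj.1 tj.2 om = b tj.1 tj.2)].
Proof.
have -> : [set om | (forall i, i \in A -> s1 i om = a i) /\
                    (forall tj, tj \in B -> w tj.1 tj.2 om = b tj.1 tj.2)] =
    (\bigcap_(i in [set i | i \in A]) s1 i @^-1` [set a i]) `&`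
    (\bigcap_(tj in [set` B]) w tj.1 tj.2 @^-1` [set b tj.1 tj.2]).
  by apply/seteqP; split => om /= [].
apply: measurableI; apply: fin_bigcap_measurable.
- exact: finite_finset.
- by move=> i _; exact: s1_discrete.
- exact: finite_seq.
- by move=> tj _; exact: w_discrete.
Qed.

Lemma hist_preimage t (h : history t) : hist t @^-1` [set h] =
  [set om | (forall i, i \in [set: 'I_n]%SET -> s1 i om = h.1 i) /\
            (forall tj, tj \in past_slots t ->
               w tj.1 tj.2 om = recorded_noise h tj.1 tj.2)].
Proof.
apply/seteqP; split => om /=.
  move=> <-; split => [i _|[k i]]; first by rewrite ffunE.
  by rewrite mem_past_slots => kt; rewrite (recorded_noise_lt _ _ kt) ffunE.
case: h => h1 h2 [H1 H2] /=; congr (_, _).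
  by apply/ffunP => i; rewrite ffunE H1 // finset.in_setT.
apply/ffunP => -[k i]; rewrite ffunE /=.
rewrite (H2 (val k, i)) /=; last by rewrite mem_past_slots.
rewrite (recorded_noise_lt _ _ (ltn_ord k)).
by congr (h2 (_, i)); apply: val_inj.
Qed.

Lemma hist_noise_preimage t (h : history t) v :
  hist_noise t @^-1` [set (h, v)] =
  [set om | (forall i, i \in [set: 'I_n]%SET -> s1 i om = h.1 i) /\
            (forall tj, tj \in past_slots t ++ present_slots t ->
               w tj.1 tj.2 om = extended_noise h v tj.1 tj.2)].
Proof.
apply/seteqP; split => om /=.
  move=> [<- <-]; split => [i _|[k i]]; first by rewrite ffunE.
  rewrite mem_slots leq_eqVlt /extended_noise => /orP[/eqP ->|kt].
    by rewrite eqxx ffunE.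
  by rewrite (ltn_eqF kt) (recorded_noise_lt _ _ kt) ffunE.
move=> [H1 H2]; congr (_, _).
  suff : (hist t @^-1` [set h]) om by [].
  rewrite hist_preimage; split => // -[k i] kt_in.
  have kt : (k < t)%N by rewrite -(mem_past_slots _ _ i).
  rewrite (H2 (k, i)); last by rewrite mem_cat kt_in.
  by rewrite /extended_noise /= (ltn_eqF kt).
apply/ffunP => i.
by rewrite ffunE (H2 (t, i)) ?mem_slots // /extended_noise eqxx.
Qed.

Lemma hist_discrete t : discrete_rv (hist t).
Proof. by move=> h; rewrite hist_preimage; exact: measurable_cylinder. Qed.

Lemma hist_noise_discrete t : discrete_rv (hist_noise t).
Proof.
by move=> [h v]; rewrite hist_noise_preimage; exact: measurable_cylinder.
Qed.

Lemma state_replay {t t'} om : (t' <= t)%N ->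
  state f s1 w t' om = replay (hist t om) t'.
Proof.
elim: t' => [|t' IH] le; first by apply/funext => i; rewrite /replay /= ffunE.
rewrite /= IH ?(ltnW le) //; apply/funext => i.
by rewrite /replay /= (recorded_noise_lt _ _ le) /= ffunE.
Qed.

Hypothesis independent : mutually_independent P s1 w.
Hypothesis w_law : forall t i v, P [set om | w t i om = v] = (PW v)%:E.

Lemma fin_pmf_hist_noise t h v :
  fin_pmf P (hist_noise t) (h, v) = fin_pmf P (hist t) h * \prod_i PW (v i).
Proof.
rewrite /fin_pmf hist_noise_preimage hist_preimage.
rewrite !independent ?slots_uniq ?past_slots_uniq //= big_cat /= mulrA.
congr (_ * _ * _).
  rewrite big_seq [RHS]big_seq; apply: eq_bigr => -[k i].
  by rewrite mem_past_slots => kt /=; rewrite /extended_noise (ltn_eqF kt).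
rewrite big_map; apply: eq_bigr => i _ /=.
by rewrite /extended_noise eqxx w_law.
Qed.

End History.

Lemma discounted_sum_le_of_rec {R : realFieldType} (γ K : R)
    (x y : nat -> R) N :
  0 <= γ -> γ * K < 1 -> x 0 = 0 -> (forall t, 0 <= x t) ->
  (forall t, x t.+1 <= y t + K * x t) ->
  \sum_(0 <= t < N) γ ^+ t * x t <=
    γ / (1 - γ * K) * \sum_(0 <= t < N) γ ^+ t * y t.
Proof.
move=> γ0 γK x0 x_ge0 x_rec.
pose SX M := \sum_(0 <= t < M) γ ^+ t * x t.
set SY := \sum_(0 <= t < N) γ ^+ t * y t.
have shifted : SX N.+1 <= γ * SY + γ * K * SX N.
  rewrite /SX big_nat_recl // x0 mulr0 add0r !mulr_sumr -big_split /=.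
  apply: ler_sum => t _; rewrite exprS -mulrA.
  have := ler_wpM2l (mulr_ge0 γ0 (exprn_ge0 t γ0)) (x_rec t); nra.
have mono : SX N <= SX N.+1.
  by rewrite /SX big_nat_recr //= lerDl mulr_ge0 ?exprn_ge0.
have : SX N * (1 - γ * K) <= γ * SY by lra.
by rewrite mulrAC ler_pdivlMr ?subr_gt0.
Qed.

Section ExpectedCostBound.
Context {R : realType} {S W : finType} {PW : W -> R}
  {f : S -> (S -> R) -> W -> S} {c : (S -> R) -> (S -> R) -> bool -> R}
  {γ K_c K_p : R}.
Hypothesis PW_prob : is_prob PW.
Hypothesis c_ge0 : forall m mh a, is_prob m -> is_prob mh -> 0 <= c m mh a.
Hypothesis γ_gt0 : 0 < γ.
Hypothesis γ_lt1 : γ < 1.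
Hypothesis K_c_ge0 : 0 <= K_c.
Hypothesis c_lipschitz : forall m mh a, is_prob m -> is_prob mh ->
  c m mh a <= K_c * normInf (m - mh).
Hypothesis Tbar_lipschitz : forall p ph, is_prob p -> is_prob ph ->
  normInf (Tbar PW f p - Tbar PW f ph) <= K_p * normInf (p - ph).
Hypothesis γK_p_lt1 : γ * K_p < 1.
Variable w0 : W.
Context {n : nat}.
Hypothesis n_gt0 : (0 < n)%N.
Context {d : measure_display} {Ω : measurableType d} {P : probability Ω R}
  {s1 : 'I_n -> Ω -> S} {w : nat -> 'I_n -> Ω -> W}.
Hypothesis s1_discrete : forall i, discrete_rv (s1 i).
Hypothesis w_discrete : forall t i, discrete_rv (w t i).
Hypothesis independent : mutually_independent P s1 w.
Hypothesis w_law : forall t i v, P [set om | w t i om = v] = (PW v)%:E.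

Let m t om : S -> R := empirical (state f s1 w t om).
Let mh t om : S -> R := mhat PW f s1 t om.
Let cost t om := c (m t om) (mh t om) false.
Let err t om := normInf (m t om - mh t om).
(* Convertible to [normInf (m t.+1 om - Tbar PW f (m t om))]. *)
Let fluct t om :=
  normInf (fluctuation PW f (state f s1 w t om) (fun i => w t i om)).
Let κ := γ * K_c / (1 - γ * K_p).
Let B := #|S|%:R / Num.sqrt (n%:R : R).

Let κ_ge0 : 0 <= κ.
Proof.
by rewrite /κ divr_ge0 ?mulr_ge0 ?subr_ge0 ?(ltW γ_gt0) ?(ltW γK_p_lt1).
Qed.

Let B_ge0 : 0 <= B.
Proof. by rewrite divr_ge0 ?sqrtr_ge0. Qed.

Let m_prob t om : is_prob (m t om).
Proof. exact: empirical_prob. Qed.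

Let mh_prob t om : is_prob (mh t om).
Proof. exact/iter_Tbar_prob/empirical_prob. Qed.

Let γ_exp_ge0 t : 0 <= γ ^+ t.
Proof. by rewrite exprn_ge0 // ltW. Qed.

Let discounted_fluct_ge0 t om : 0 <= κ * γ ^+ t * fluct t om.
Proof. by apply: mulr_ge0; [exact: mulr_ge0|exact: normInf_ge0]. Qed.

Let discounted_cost_ge0 t om : 0 <= γ ^+ t * cost t om.
Proof. by apply: mulr_ge0 => //; exact: c_ge0. Qed.

Lemma err_rec t om : err t.+1 om <= fluct t om + K_p * err t om.
Proof.
apply: le_trans (normInf_subr_triangle _ (Tbar PW f (m t om)) _) _.
apply: lerD => //.
exact: Tbar_lipschitz _ _ (m_prob t om) (mh_prob t om).
Qed.

Lemma discounted_cost_le om :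
  (\sum_(0 <= t <oo) ((γ ^+ t * cost t om)%:E) <=
   \sum_(0 <= t <oo) ((κ * γ ^+ t * fluct t om)%:E))%E.
Proof.
apply: lee_lim.
- by apply: is_cvg_nneseries => t _ _; rewrite lee_fin.
- by apply: is_cvg_nneseries => t _ _; rewrite lee_fin.
apply: nearW => N; rewrite !sumEFin lee_fin.
apply: (@le_trans _ _ (K_c * \sum_(0 <= t < N) γ ^+ t * err t om)).
  rewrite mulr_sumr; apply: ler_sum => t _; rewrite mulrCA.
  exact/ler_wpM2l/c_lipschitz.
have err0 : err 0 om = 0 by rewrite /err /mh /mhat subrr normInf0.
have := discounted_sum_le_of_rec γ K_p (err^~ om) (fluct^~ om) N (ltW γ_gt0)
  γK_p_lt1 err0 (fun t => normInf_ge0 _) (fun t => err_rec t om).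
move=> /(ler_wpM2l K_c_ge0) /le_trans; apply.
rewrite mulrA [K_c * _]mulrCA mulrA -/κ mulr_sumr.
by apply: ler_sum => t _; rewrite mulrA.
Qed.

Let fluct_of {t} (hv : @history S W n t * {ffun 'I_n -> W}) :=
  normInf (fluctuation PW f (replay f w0 hv.1 t) hv.2).

Lemma fluct_hist_noise t om : fluct t om = fluct_of (hist_noise s1 w t om).
Proof.
rewrite /fluct /fluct_of /= -(state_replay f w0 s1 w om (leqnn t)).
congr (normInf (fluctuation _ _ _ _)).
by apply/funext => i; rewrite ffunE.
Qed.

Lemma measurable_cost t :
  measurable_fun setT (fun om => (γ ^+ t * cost t om)%:E).
Proof.
pose g (h : @history S W n t) : R := γ ^+ t *
  c (empirical (replay f w0 h t)) (iter t (Tbar PW f) (empirical h.1)) false.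
have -> : (fun om => (γ ^+ t * cost t om)%:E) =
    (fun om => (g (hist s1 w t om))%:E).
  apply/funext => om; rewrite /g /cost /m /mh /mhat.
  rewrite (state_replay f w0 s1 w om (leqnn t)).
  congr (_ * c _ (iter _ _ _) _)%:E.
  by congr empirical; apply/funext => i; rewrite ffunE.
exact: discrete_rv_measurable_fun _ g
  (hist_discrete w0 s1 w s1_discrete w_discrete t).
Qed.

Lemma measurable_fluct t :
  measurable_fun setT (fun om => (κ * γ ^+ t * fluct t om)%:E).
Proof.
under eq_fun do rewrite fluct_hist_noise.
exact: discrete_rv_measurable_fun _ (fun hv => κ * γ ^+ t * fluct_of hv)
  (hist_noise_discrete w0 s1 w s1_discrete w_discrete t).
Qed.

Lemma integral_fluct_le t :
  (\int[P]_om (κ * γ ^+ t * fluct t om)%:E <= (κ * γ ^+ t * B)%:E)%E.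
Proof.
have k_ge0 : 0 <= κ * γ ^+ t by rewrite mulr_ge0.
under eq_integral do rewrite fluct_hist_noise.
rewrite (integral_discrete_rv P _ (fun hv => κ * γ ^+ t * fluct_of hv)
  (hist_noise_discrete w0 s1 w s1_discrete w_discrete t)); last first.
  by move=> hv; exact/mulr_ge0/normInf_ge0.
rewrite lee_fin; under eq_bigr do rewrite -mulrA.
rewrite -mulr_sumr ler_wpM2l //.
pose F h v := fluct_of (h, v) * fin_pmf P (hist_noise s1 w t) (h, v).
rewrite (eq_bigr (fun hv => F hv.1 hv.2)); last by move=> -[h v].
rewrite -(pair_bigA _ F) /= /F.
apply: le_trans (_ : \sum_h fin_pmf P (hist s1 w t) h * B <= B).
  apply: ler_sum => h _.
  under eq_bigr do rewrite (fin_pmf_hist_noise PW w0 P s1 w independent w_law)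
    mulrCA.
  rewrite -mulr_sumr ler_wpM2l ?fine_ge0 //.
  under eq_bigr do rewrite mulrC.
  exact: (iid_expect_normInf_fluctuation PW f PW_prob n_gt0 (replay f w0 h t)).
by rewrite -mulr_suml sum_fin_pmf ?mul1r //; exact: hist_discrete.
Qed.

Lemma expected_cost_le :
  (expected_cost P PW f c γ s1 w <= (κ * B / (1 - γ))%:E)%E.
Proof.
have term_ge0 t om : (0 <= (κ * γ ^+ t * fluct t om)%:E)%E.
  by rewrite lee_fin discounted_fluct_ge0.
have cost_ge0 t om : (0 <= (γ ^+ t * cost t om)%:E)%E.
  by rewrite lee_fin discounted_cost_ge0.
apply: (@le_trans _ _
  (\int[P]_om \sum_(0 <= t <oo) (κ * γ ^+ t * fluct t om)%:E)%E).
  apply: ge0_le_integral => //.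
  - by move=> om _; apply: nneseries_ge0 => t _ _; exact: cost_ge0.
  - apply: (ge0_emeasurable_sum (P := xpredT)).
      by move=> t om _ _; exact: cost_ge0.
    by move=> t _; exact: measurable_cost.
  - apply: (ge0_emeasurable_sum (P := xpredT)).
      by move=> t om _ _; exact: term_ge0.
    by move=> t _; exact: measurable_fluct.
  - by move=> om _; exact: discounted_cost_le.
rewrite integral_nneseries // => [|t]; last exact: measurable_fluct.
apply: le_trans (_ : \sum_(0 <= t <oo) (κ * γ ^+ t * B)%:E <= _)%E.
  apply: lee_nneseries => [t _ _|t _]; last exact: integral_fluct_le.
  by apply: integral_ge0 => om _; exact: term_ge0.
apply: lime_le.
  apply: is_cvg_nneseries => t _ _; rewrite lee_fin.
  exact: mulr_ge0 (mulr_ge0 κ_ge0 (γ_exp_ge0 t)) B_ge0.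
apply: nearW => N; rewrite sumEFin lee_fin.
under eq_bigr do rewrite mulrAC.
have γ_norm : `|γ| < 1 by rewrite ger0_norm // ltW.
have := geometric_le_lim N (mulr_ge0 κ_ge0 B_ge0) γ_gt0 γ_norm.
by rewrite /series /= /geometric.
Qed.

End ExpectedCostBound.

Theorem theorem6 (R : realType) (S W : finType) (PW : W -> R)
  (f : S -> (S -> R) -> W -> S) (c : (S -> R) -> (S -> R) -> bool -> R)
  (γ K_T K_c K_p : R) :
  is_prob PW ->
  (forall m mh a, is_prob m -> is_prob mh -> 0 <= c m mh a) ->
  0 < γ < 1 ->
  0 < K_T -> 0 < K_c -> 0 < K_p ->
  (forall s' s m m', is_prob m -> is_prob m' ->
     `|kernelT PW f s' s m - kernelT PW f s' s m'| <= K_T * normInf (m - m')) ->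
  (forall m mh a, is_prob m -> is_prob mh ->
     c m mh a <= K_c * normInf (m - mh)) ->
  (forall p ph, is_prob p -> is_prob ph ->
     normInf (Tbar PW f p - Tbar PW f ph) <= K_p * normInf (p - ph)) ->
  γ * K_p < 1 ->
  exists C : R,
  forall (n : nat), (0 < n)%N ->
  forall (d : measure_display) (Ω : measurableType d) (P : probability Ω R)
    (s1 : 'I_n -> Ω -> S) (w : nat -> 'I_n -> Ω -> W),
    (forall i, discrete_rv (s1 i)) ->
    (forall t i, discrete_rv (w t i)) ->
    mutually_independent P s1 w ->
    (forall t i v, P [set ω | w t i ω = v] = (PW v)%:E) ->
    (expected_cost P PW f c γ s1 w <=
      ((γ * K_c / ((1 - γ) * (1 - γ * K_p))) * (C / Num.sqrt n%:R))%:E)%E.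
Proof.
move=> PW_prob c_ge0 /andP[γ_gt0 γ_lt1] _ Kc_gt0 _ _ c_lip Tbar_lip γKp_lt1.
have [w0 _] : exists w0 : W, true.
  case: (pickP (xpredT : pred W)) => [w0 _|W0]; first by exists w0.
  move: PW_prob.2; rewrite big1 => [/eqP|u _]; last by have := W0 u.
  by rewrite eq_sym oner_eq0.
exists #|S|%:R => n n_gt0 d Ω P s1 w s1_discrete w_discrete independent w_law.
apply: le_trans (expected_cost_le PW_prob c_ge0 γ_gt0 γ_lt1 (ltW Kc_gt0)
  c_lip Tbar_lip γKp_lt1 w0 n_gt0 s1_discrete w_discrete independent w_law) _.
have sqrt_n_gt0 : 0 < Num.sqrt (n%:R : R) by rewrite sqrtr_gt0 ltr0n.
rewrite lee_fin le_eqVlt; apply/predU1l.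
by field; rewrite !gt_eqF // subr_gt0.
Qed.
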